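(* Let $B\ge 2$ and $\eta\in\mathbb{N}$. If $\gamma_B(\eta+1)\geq B^2$, then $\gamma_B(\eta+1)>\gamma_B(\eta)$.
   Context: Fix an integer base $B \geq 2$. Every integer $x>0$ is written uniquely as $x=\sum_{i=0}^{L(x)-1} x_i B^i$ with digits $0 \le x_i \le B-1$ and $x_{L(x)-1}\neq 0$. Define $\mathcal{H}_B(x)=\sum_{i=0}^{L(x)-1} x_i^2$, $\mathcal{H}_B(0)=0$, $\mathcal{H}_B^0(x)=x$, $\mathcal{H}_B^{n}=\mathcal{H}_B\circ\mathcal{H}_B^{n-1}$. A positive integer $x$ is happy if $\mathcal{H}_B^n(x)=1$ for some $n\in\mathbb{N}$; its height is $\eta_B(x)=\min\{\alpha\in\mathbb{N}:\mathcal{H}_B^\alpha(x)=1\}$. For $n\in\mathbb{N}$, $\gamma_B(n)$ denotes the smallest happy number $x\ge 1$ with $\eta_B(x)=n$. *)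

From mathcomp Require Import all_boot.
Set Implicit Arguments. Unset Strict Implicit. Unset Printing Implicit Defensive.

Definition digit (B x i : nat) : nat := (x %/ B ^ i) %% B.

(* L(x): number of base-B digits of x > 0 (trunc_log B x = largest e with B^e <= x) *)
Definition numdigits (B x : nat) : nat := (trunc_log B x).+1.

Definition H (B x : nat) : nat :=
  if x == 0 then 0 else \sum_(i < numdigits B x) (digit B x i) ^ 2.

Definition happy (B x : nat) : Prop := 0 < x /\ exists n, iter n (H B) x = 1.

(* eta_B(x) = n : the least alpha with H_B^alpha(x) = 1 is n *)
Definition height (B x n : nat) : Prop :=
  iter n (H B) x = 1 /\ forall m, m < n -> iter m (H B) x <> 1.

(* gamma_B(n) = x : x is the smallest happy number of height n *)
Definition is_gamma (B n x : nat) : Prop :=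
  [/\ 0 < x, happy B x, height B x n &
      forall y, 0 < y -> happy B y -> height B y n -> x <= y].

From mathcomp Require Import all_boot.
From mathcomp Require Import zify.

Set Implicit Arguments.
Unset Strict Implicit.
Unset Printing Implicit Defensive.

(* If gamma_B(eta+1) = x >= B^2, then the happy function strictly decreases
   at x: H_B(x) < x.  Since x has height eta+1, its image H_B(x) is a positive
   happy number of height eta, so the smallest such number gamma_B(eta)
   exists and is at most H_B(x) < x. *)

Section DigitSquares.

Variable B : nat.

Fixpoint sqdig (k x : nat) : nat :=
  if k is k'.+1 then (x %% B) ^ 2 + sqdig k' (x %/ B) else 0.

Lemma sqdig0 k : sqdig k 0 = 0.
Proof. by elim: k => //= k IH; rewrite mod0n div0n IH. Qed.

Lemma sum_digit_sq k x : \sum_(i < k) digit B x i ^ 2 = sqdig k x.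
Proof.
elim: k x => [|k IH] x; first by rewrite big_ord0.
rewrite big_ord_recl /= -IH /digit expn0 divn1; congr (_ + _).
by apply: eq_bigr => i _; rewrite /bump add1n -divnMA -expnS.
Qed.

Lemma H_sqdig x : 0 < x -> H B x = sqdig (numdigits B x) x.
Proof. by rewrite /H lt0n => /negbTE ->; rewrite sum_digit_sq. Qed.

Hypothesis B_ge2 : 2 <= B.

Let divn_eqB x : x = x %/ B * B + x %% B /\ x %% B < B.
Proof. by split; [exact: divn_eq | rewrite ltn_mod; lia]. Qed.

(* For q >= 1: sqdig k q <= (q - 1) B + 1, since a digit d < B has d^2 <= d(B-1). *)
Lemma sqdig_le_pos k q : 1 <= q -> sqdig k q + B <= q * B + 1.
Proof.
elim: k q => [|k IH] q q_gt0 /=; first by nia.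
have [q_eq q_mod] := divn_eqB q.
case: (posnP (q %/ B)) => [q_div0 | q_div_gt0].
  by rewrite q_div0 sqdig0; rewrite q_div0 in q_eq; nia.
by have := IH _ q_div_gt0; nia.
Qed.

(* For q >= B a sharper bound, gaining (B-1)(B-2) from the last digit. *)
Lemma sqdig_le_base k q : B <= q -> sqdig k q + (B - 1) * (B - 2) + 1 <= q * B.
Proof.
case: k => [|k] q_geB /=; first by nia.
have [q_eq q_mod] := divn_eqB q.
have q_div_gt0 : 1 <= q %/ B by rewrite divn_gt0; lia.
by have := sqdig_le_pos k q_div_gt0; nia.
Qed.

(* Writing x = q B + r with q >= B, the bound for q plus r^2 <= (B-1)^2 gives
   sqdig k x < x. *)
Lemma sqdig_lt k x : B ^ 2 <= x -> sqdig k x < x.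
Proof.
have B2_gt0 : 0 < B ^ 2 by rewrite expn_gt0; lia.
case: k => [|k] x_ge /=; first lia.
have [x_eq x_mod] := divn_eqB x.
have x_div_geB : B <= x %/ B by rewrite leq_divRL; [rewrite mulnn | lia].
by have := sqdig_le_base k x_div_geB; nia.
Qed.

Lemma H_lt x : B ^ 2 <= x -> H B x < x.
Proof.
move=> x_ge; rewrite H_sqdig; first exact: sqdig_lt.
by apply: leq_trans x_ge; rewrite expn_gt0; lia.
Qed.

End DigitSquares.

Section Heights.

Variable B : nat.

Lemma iter_H0 n : iter n (H B) 0 = 0.
Proof. by elim: n => //= n ->. Qed.

Lemma height_gt0 y n : height B y n -> 0 < y.
Proof. by case=> y_iter _; case: (posnP y) y_iter => // ->; rewrite iter_H0. Qed.

Lemma height_H x n : height B x n.+1 -> height B (H B x) n.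
Proof.
case=> x_iter x_min; split; first by rewrite -iterSr.
by move=> m lt_mn; rewrite -iterSr; apply: x_min.
Qed.

(* Boolean reflection of [height], needed to minimise over it. *)
Definition heightb (y n : nat) : bool :=
  (iter n (H B) y == 1) && [forall m : 'I_n, iter m (H B) y != 1].

Lemma heightP y n : reflect (height B y n) (heightb y n).
Proof.
apply: (iffP andP) => [[/eqP y_iter /forallP y_min] | [y_iter y_min]].
  by split=> // m lt_mn; apply/eqP; exact: (y_min (Ordinal lt_mn)).
by split; [apply/eqP | apply/forallP => m; apply/eqP; apply: y_min].
Qed.

Lemma gamma_le y n : height B y n -> exists g, is_gamma B n g /\ g <= y.
Proof.
move=> /heightP y_height.
have ex_h : exists y, heightb y n by exists y.
case: (ex_minnP ex_h) => g /heightP g_height g_min.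
have g_gt0 := height_gt0 g_height.
exists g; split; last exact: g_min.
split=> //; first by split=> //; exists n; case: g_height.
by move=> z _ _ /heightP; apply: g_min.
Qed.

End Heights.

Theorem lemma2p2 (B eta x : nat) :
  2 <= B -> is_gamma B eta.+1 x -> B ^ 2 <= x ->
  exists y, is_gamma B eta y /\ y < x.
Proof.
move=> B_ge2 [_ _ x_height _] x_ge.
have [y [y_gamma y_le]] := gamma_le (height_H x_height).
by exists y; split=> //; apply: leq_ltn_trans y_le (H_lt B_ge2 x_ge).
Qed.
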